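(* There is an absolute constant $d$ such that for every finite simple digraph $H$, every positive integer $k$, and every tournament $T$ that does not contain $k$ pairwise vertex-disjoint topological minor copies of $H$, we have $\mathrm{pw}(T)\le d\,\|H\|\,k$.
   Context: All digraphs are finite and simple; $\|H\|:=|V(H)|+|A(H)|$. A tournament is a simple digraph with exactly one arc between every pair of distinct vertices. A topological minor copy of $H$ in $T$ is a subgraph $\widehat H$ of $T$ together with a map sending vertices of $H$ to distinct vertices of $\widehat H$ and arcs $(u,v)$ of $H$ to directed paths from the image of $u$ to the image of $v$ that are internally vertex-disjoint, avoid images of vertices of $H$ in their interiors, and together cover all arcs and all non-image vertices of $\widehat H$ exactly once. An interval decomposition of a tournament $T$ is a map $I$ assigning to each vertex a nonempty closed interval $[\alpha,\beta]$ with integer endpoints, such that whenever $\max I(u)<\min I(v)$, the arc between $u$ and $v$ is $(u,v)$. Its width is $\max_{\alpha\in\mathbb{Z}}|\{v: \alpha\in I(v)\}|$, and the pathwidth $\mathrm{pw}(T)$ is the minimum width of an interval decomposition of $T$. *)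

From HB Require Import structures.
From mathcomp Require Import all_boot all_order all_algebra.
From mathcomp Require Import boolp.
Set Implicit Arguments. Unset Strict Implicit. Unset Printing Implicit Defensive.
Import Order.TTheory GRing.Theory Num.Theory.

(* A finite simple digraph is a finType V with an arc relation A : rel V that is
   irreflexive (no loops; a relation has no parallel arcs). *)
Definition simple_digraph (V : finType) (A : rel V) : Prop := irreflexive A.

Definition dg_size (V : finType) (A : rel V) : nat :=
  #|V| + #|[set p : V * V | A p.1 p.2]|.

Definition tournament (V : finType) (E : rel V) : Prop :=
  irreflexive E /\ forall u v : V, u != v -> E u v = ~~ E v u.

(* Topological minor copy of H = (VH, AH) in T = (VT, E): phi sends vertices of H
   to distinct vertices of T; P u v is the sequence of interior vertices of the
   directed path (in T) from phi u to phi v representing the arc (u,v) of H. *)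
Definition topminor_copy (VH : finType) (AH : rel VH) (VT : finType) (E : rel VT)
  (phi : VH -> VT) (P : VH -> VH -> seq VT) : Prop :=
  injective phi /\
  (forall u v, AH u v ->
     [/\ path E (phi u) (rcons (P u v) (phi v)), uniq (P u v) &
         forall w x, w \in P u v -> w != phi x]) /\
  (forall u v u' v', AH u v -> AH u' v' -> (u, v) != (u', v') ->
     forall w, w \in P u v -> w \notin P u' v').

Definition copy_verts (VH : finType) (AH : rel VH) (VT : finType)
  (phi : VH -> VT) (P : VH -> VH -> seq VT) : {set VT} :=
  [set w | [exists x, w == phi x] || [exists p : VH * VH, AH p.1 p.2 && (w \in P p.1 p.2)]].

Definition has_k_disjoint_copies (VH : finType) (AH : rel VH) (VT : finType)
  (E : rel VT) (k : nat) : Prop :=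
  exists (phi : 'I_k -> VH -> VT) (P : 'I_k -> VH -> VH -> seq VT),
    (forall i, topminor_copy AH E (phi i) (P i)) /\
    (forall i j, i != j ->
       [disjoint copy_verts AH (phi i) (P i) & copy_verts AH (phi j) (P j)]).

(* Interval decompositions: I v = (alpha, beta) encodes [alpha, beta]. *)
Definition interval_decomp (VT : finType) (E : rel VT) (I : VT -> int * int) : Prop :=
  (forall v, ((I v).1 <= (I v).2)%R) /\
  (forall u v, ((I u).2 < (I v).1)%R -> E u v).

Definition width_le (VT : finType) (I : VT -> int * int) (w : nat) : Prop :=
  forall alpha : int, #|[set v | ((I v).1 <= alpha)%R && (alpha <= (I v).2)%R]| <= w.

Definition pw_pred (VT : finType) (E : rel VT) : pred nat :=
  fun w => `[< exists I, interval_decomp E I /\ width_le I w >].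

Lemma pw_exists (VT : finType) (E : rel VT) : exists w, pw_pred E w.
Proof.
exists #|VT|; apply/asboolP; exists (fun _ => (0%R, 0%R)); split.
  by split=> // u v; rewrite Order.POrderTheory.ltxx.
by move=> alpha; apply: max_card.
Qed.

Definition pathwidth (VT : finType) (E : rel VT) : nat := ex_minn (pw_exists E).

From mathcomp Require Import all_boot all_order all_algebra.
From mathcomp Require Import zify boolp.

(* Order the vertices of the tournament by in-degree.  At each cut of this
   order take a maximal matching of the backward arcs crossing it: removing
   the matched vertices leaves a separation A => B, and choosing these
   separations extremally makes them nest, so that they assemble into an
   interval decomposition whose width is about four times the largest such
   matching.  A large matching at some cut yields k disjoint copies of H:
   either some window of nearly equal in-degrees is large, and any two of its
   vertices are joined by a path with at most two inner vertices avoiding any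
   small set, or most matched arcs jump far in in-degree, and the vertices
   just left of the cut are pairwise joined through a matched arc by paths
   with at most four inner vertices avoiding any small set.  In both cases the
   branch vertices and the arcs of the k copies are routed greedily. *)

Set Implicit Arguments. Unset Strict Implicit. Unset Printing Implicit Defensive.

Lemma path_shorten (T : eqType) (e : rel T) x y (p : seq T) :
  x != y -> path e x (rcons p y) ->
  exists2 q, [/\ path e x (rcons q y), uniq q & size q <= size p] & {subset q <= p}.
Proof.
move=> neq_xy e_p; have := last_rcons x p y.
case: (shortenP e_p) => q' e_q' /= /andP [_ uniq_q'] sub_q'.
case/lastP: q' e_q' uniq_q' sub_q' => [_ _ _ /= eq_xy | q z].
  by rewrite eq_xy eqxx in neq_xy.
rewrite last_rcons rcons_uniq => e_q /andP [z_q uniq_q] sub_q eq_zy; subst z.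
have sub : {subset q <= p}.
  move=> w q_w; have := sub_q w; rewrite !mem_rcons !inE q_w orbT => /(_ isT).
  by case/orP => [/eqP eq_wy | //]; rewrite -eq_wy q_w in z_q.
by exists q => //; split => //; apply: uniq_leq_size.
Qed.

Lemma card_setD_ge (T : finType) (A U : {set T}) : #|A| <= #|A :\: U| + #|U|.
Proof. by rewrite cardsD; have := subset_leq_card (subsetIr A U); lia. Qed.

Lemma card_le_inj_in (T T' : finType) (f : T -> T') (A : {set T}) (C : {set T'}) :
  {in A &, injective f} -> {in A, forall x, f x \in C} -> #|A| <= #|C|.
Proof.
move=> inj_f AC; rewrite -(card_in_imset inj_f).
by apply/subset_leq_card/subsetP => _ /imsetP [x Ax ->]; apply: AC.
Qed.

Lemma injection_into (D V : finType) (X : {set V}) :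
  #|D| <= #|X| -> exists2 f : D -> V, injective f & forall d, f d \in X.
Proof.
move=> le_DX; exists (fun d => enum_val (widen_ord le_DX (enum_rank d))) => [d d' | d].
  by move=> /enum_val_inj /(congr1 val) /= /val_inj /enum_rank_inj.
exact: enum_valP.
Qed.

Lemma matching_avoid (T : finType) (P : {set T * T}) (U : {set T}) :
  {in P &, injective fst} -> {in P &, injective snd} -> 2 * #|U| < #|P| ->
  exists2 p, p \in P & (p.1 \notin U) && (p.2 \notin U).
Proof.
move=> inj1 inj2 big_P.
have hit (f : T * T -> T) : {in P &, injective f} -> #|[set p in P | f p \in U]| <= #|U|.
  move=> inj_f; apply: (card_le_inj_in (f := f)) => [p q /setIdP [Pp _] /setIdP [Pq _] | p].
    exact: inj_f.
  by case/setIdP.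
set H1 := [set p in P | p.1 \in U]; set H2 := [set p in P | p.2 \in U].
have : 0 < #|P :\: (H1 :|: H2)|.
  have := card_setD_ge P (H1 :|: H2); have := (leq_card_setU H1 H2).1.
  have card_H1 : #|H1| <= #|U| := hit _ inj1.
  have card_H2 : #|H2| <= #|U| := hit _ inj2.
  lia.
case/card_gt0P => p /setDP [Pp]; rewrite /H1 /H2 !inE Pp /= negb_or => Up.
by exists p.
Qed.

Lemma maximal_matching (T : finType) (r : rel T) :
  exists P : {set T * T},
    [/\ {in P, forall p, r p.1 p.2}, {in P &, injective fst}, {in P &, injective snd} &
        forall u a, r u a -> (u \in fst @: P) || (a \in snd @: P)].
Proof.
pose matching (P : {set T * T}) := [forall p in P, r p.1 p.2] &&
  [forall p in P, forall q in P, (p.1 == q.1) || (p.2 == q.2) ==> (p == q)].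
have [P /maxsetP [/andP [/forall_inP r_P /forall_inP inj_P] max_P]] : {P | maxset matching P}.
  by apply: ex_maxset; exists set0; apply/andP; split; apply/forall_inP => p; rewrite inE.
have eq_P p q : p \in P -> q \in P -> (p.1 == q.1) || (p.2 == q.2) -> p = q.
  by move=> Pp Pq; move/forall_inP/(_ q Pq)/implyP: (inj_P p Pp) => eq_pq /eq_pq /eqP.
exists P; split=> // [p q Pp Pq eq_pq | p q Pp Pq eq_pq | u a r_ua].
- by apply: eq_P; rewrite ?eq_pq ?eqxx.
- by apply: eq_P; rewrite ?eq_pq ?eqxx ?orbT.
apply: contraT; rewrite negb_or => /andP [u_P a_P].
suff: (u, a) \in P by move=> Pua; case/negP: u_P; apply/imsetP; exists (u, a).
rewrite -(max_P ((u, a) |: P)) ?subsetUr ?setU11 //; apply/andP; split.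
  by apply/forall_inP => p /setU1P [-> | /r_P].
apply/forall_inP => p /setU1P [-> | Pp]; apply/forall_inP => q /setU1P [-> | Pq] /=.
- by rewrite !eqxx.
- by apply/implyP => /orP [] /eqP eq_q; [case/negP: u_P | case/negP: a_P];
    apply/imsetP; exists q; rewrite ?eq_q.
- by apply/implyP => /orP [] /eqP eq_p; [case/negP: u_P | case/negP: a_P];
    apply/imsetP; exists p; rewrite ?eq_p.
- by apply/implyP => /(eq_P p q Pp Pq) ->.
Qed.

Section Tournament.
Variables (V : finType) (E : rel V).

Definition indeg (v : V) := #|[set u | E u v]|.
Definition outdeg (v : V) := #|[set u | E v u]|.
Definition indeg_in (Q : {set V}) (v : V) := #|[set u in Q | E u v]|.
Definition outdeg_in (Q : {set V}) (v : V) := #|[set u in Q | E v u]|.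

Hypothesis tE : tournament E.

Lemma tour_irr v : E v v = false.
Proof. by case: tE => irrE _; apply: irrE. Qed.

Lemma tour_asym u v : E u v -> E v u = false.
Proof.
case: (eqVneq u v) => [-> | neq_uv Euv]; first by rewrite tour_irr.
by case: tE => _ /(_ u v neq_uv); rewrite Euv => /esym/negbTE.
Qed.

Lemma tour_total u v : u != v -> ~~ E u v -> E v u.
Proof. by case: tE => _ totE /totE ->; rewrite negbK. Qed.

Lemma outdeg_in_add_indeg_in (Q : {set V}) v :
  v \in Q -> outdeg_in Q v + indeg_in Q v + 1 = #|Q|.
Proof.
move=> Qv; rewrite (cardsD1 v Q) Qv add1n addn1; congr _.+1.
have -> : Q :\ v = [set u in Q | E v u] :|: [set u in Q | E u v].
  apply/setP => u; rewrite !inE; case: (eqVneq u v) => [-> | neq_uv] /=.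
    by rewrite tour_irr !andbF.
  case: (u \in Q); case Evu: (E v u) => //=.
  by apply/esym/tour_total; rewrite ?Evu // eq_sym.
rewrite cardsU; have -> : [set u in Q | E v u] :&: [set u in Q | E u v] = set0.
  apply/setP => u; rewrite !inE; apply/negbTE/negP => /andP [/andP [_ Evu] /andP [_]].
  by rewrite tour_asym.
by rewrite cards0 subn0.
Qed.

Lemma outdeg_add_indeg v : outdeg v + indeg v + 1 = #|V|.
Proof.
rewrite -cardsT -(outdeg_in_add_indeg_in (in_setT v)).
by congr (_ + _ + 1); apply: eq_card => u; rewrite !inE.
Qed.

(* The in-degrees inside [Q] average (#|Q| - 1) / 2. *)
Lemma card_le_indeg_in (Q : {set V}) c :
  {in Q, forall v, indeg_in Q v <= c} -> #|Q| <= 2 * c + 1.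
Proof.
move=> le_c.
have sum_in_out : \sum_(v in Q) indeg_in Q v = \sum_(v in Q) outdeg_in Q v.
  rewrite /indeg_in /outdeg_in.
  under eq_bigr do rewrite -sum1dep_card big_mkcondr.
  under [RHS]eq_bigr do rewrite -sum1dep_card big_mkcondr.
  exact: exchange_big.
have sum_all : \sum_(v in Q) (outdeg_in Q v + indeg_in Q v + 1) = #|Q| * #|Q|.
  by rewrite (eq_bigr _ (fun v => outdeg_in_add_indeg_in (Q := Q) (v := v))) sum_nat_const.
have le_sum : \sum_(v in Q) indeg_in Q v <= #|Q| * c.
  by rewrite -sum_nat_const; apply: leq_sum.
move: sum_all; rewrite !big_split /= -sum_in_out sum1_card.
case: #|Q| le_sum => [|q]; nia.
Qed.

Lemma card_dominated_le (Q Z : {set V}) c :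
  [disjoint Q & Z] -> (forall z q, z \in Z -> q \in Q -> E z q) ->
  {in Q, forall q, indeg q <= c} -> #|Q| <= 2 * (c - #|Z|) + 1.
Proof.
move=> dQZ ZQ le_c; apply: card_le_indeg_in => q Qq.
have sub : [set u in Q | E u q] :|: Z \subset [set u | E u q].
  by apply/subsetP => u; rewrite !inE => /orP [/andP [] | /ZQ ->].
have disj : [disjoint [set u in Q | E u q] & Z].
  by apply: disjointWl dQZ; apply/subsetP => u; rewrite inE => /andP [].
have := subset_leq_card sub; rewrite cardsU (disjoint_setI0 disj) cards0.
have := le_c q Qq; rewrite /indeg_in /indeg; lia.
Qed.

Lemma indeg_lt_add_mid x y :
  E y x -> indeg y < indeg x + #|[set z | E x z && E z y]|.
Proof.
move=> Eyx.
have neq_xy : x != y by apply: contraTneq Eyx => ->; rewrite tour_irr.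
have sub : [set z | E x z] :|: [set z | E z y] \subset ~: [set x; y].
  apply/subsetP => z; rewrite !inE => /orP [] Ez; apply/norP; split;
    apply: contraTneq Ez => ->; by rewrite ?tour_irr ?(tour_asym Eyx).
have := subset_leq_card sub; rewrite cardsU.
have := cardsC [set x; y]; rewrite cards2 neq_xy.
have -> : [set z | E x z] :&: [set z | E z y] = [set z | E x z && E z y].
  by apply/setP => z; rewrite !inE.
have := outdeg_add_indeg x; rewrite /outdeg /indeg; lia.
Qed.

End Tournament.

Lemma tour_flip (V : finType) (E : rel V) :
  tournament E -> tournament (fun u v => E v u).
Proof.
by case=> irrE totE; split=> [v | u v /=]; [apply: irrE | rewrite eq_sym; apply: totE].
Qed.

Definition router (V : finType) (E : rel V) (X : {set V}) (l B : nat) :=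
  forall U : {set V}, #|U| <= B -> forall x y, x \in X -> y \in X -> x != y ->
  exists p : seq V, [/\ size p <= l, path E x (rcons p y) & [disjoint p & U]].


Section IndegWindow.
Variables (V : finType) (E : rel V).
Hypothesis tE : tournament E.

Definition indeg_window t M := [set v | t <= indeg E v <= t + M].

Lemma avoiding_dominated x y (U : {set V}) :
  (forall z, z \notin U -> E x z -> ~~ E z y) ->
  (forall a b, a \notin U -> b \notin U -> E x a -> E b y -> ~~ E a b) ->
  [disjoint [set z | E x z] :\: U & [set z | E z y] :\: U] /\
  forall b a, b \in [set z | E z y] :\: U -> a \in [set z | E x z] :\: U -> E b a.
Proof.
move=> no_mid no_bridge; split.
  rewrite -setI_eq0 -subset0; apply/subsetP => z.
  rewrite !inE => /andP [/andP [Uz Exz] /andP [_ Ezy]].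
  by have := no_mid z Uz Exz; rewrite Ezy.
move=> b a; rewrite !inE => /andP [Ub Eby] /andP [Ua Exa].
apply: (tour_total tE) (no_bridge a b Ua Ub Exa Eby).
by apply: contraNneq (no_mid a Ua Exa) => ->.
Qed.

(* Outside [U], in(y) dominates out(x), so both meet the window in O(M + #|U|)
   vertices; the rest of the window avoids out(x) :|: in(y), whose complement
   has at most M + 1 + #|U| vertices. *)
Lemma card_indeg_window_le t M (U : {set V}) x y :
  x \in indeg_window t M -> y \in indeg_window t M ->
  (forall z, z \notin U -> E x z -> ~~ E z y) ->
  (forall a b, a \notin U -> b \notin U -> E x a -> E b y -> ~~ E a b) ->
  #|indeg_window t M| <= 5 * M + 6 * #|U| + 3.
Proof.
set S := indeg_window t M => Sx Sy no_mid no_bridge.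
pose A := [set z | E x z]; pose B := [set z | E z y].
pose A0 := A :\: U; pose B0 := B :\: U.
have [dA0B0 B0A0] : [disjoint A0 & B0] /\ forall b a, b \in B0 -> a \in A0 -> E b a.
  exact: avoiding_dominated.
have AB_U : A :&: B \subset U.
  apply/subsetP => z; rewrite !inE => /andP [Exz Ezy].
  by apply: contraLR Ezy => /no_mid /(_ Exz).
have cardQ : #|A0 :&: S| <= 2 * (t + M - #|B0|) + 1.
  apply: (card_dominated_le tE) => [|b a Bb /setIP [Aa _] | a /setIP [_]].
  - exact: disjointWl (subsetIl _ _) dA0B0.
  - exact: B0A0.
  - by rewrite inE => /andP [].
have cardQ' : #|B0 :&: S| <= 2 * (#|V| - 1 - t - #|A0|) + 1.
  apply: (card_dominated_le (tour_flip tE)) => [|a b Aa /setIP [Bb _] | b /setIP [_]].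
  - by rewrite disjoint_sym in dA0B0; apply: disjointWl (subsetIl _ _) dA0B0.
  - exact: B0A0.
  - rewrite inE => /andP [tb _]; change (outdeg E b <= #|V| - 1 - t).
    by have := outdeg_add_indeg tE b; lia.
have cover : S \subset ~: (A :|: B) :|: U :|: (A0 :&: S) :|: (B0 :&: S).
  apply/subsetP => z Sz; rewrite !in_setU !in_setI Sz !andbT !inE.
  by case: (z \in U) (E x z) (E z y) => [] [] [].
have cardA : #|A| + indeg E x + 1 = #|V| := outdeg_add_indeg tE x.
have cardB : #|B| = indeg E y by [].
have cardA0 : #|A| <= #|A0| + #|U| := card_setD_ge A U.
have cardB0 : #|B| <= #|B0| + #|U| := card_setD_ge B U.
have := subset_leq_card cover.
have := (leq_card_setU (~: (A :|: B) :|: U :|: (A0 :&: S)) (B0 :&: S)).1.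
have := (leq_card_setU (~: (A :|: B) :|: U) (A0 :&: S)).1.
have := (leq_card_setU (~: (A :|: B)) U).1.
have := cardsC (A :|: B); rewrite cardsU.
have := subset_leq_card AB_U.
by move: Sx Sy; rewrite !inE; lia.
Qed.

Lemma indeg_window_router t M B :
  5 * M + 6 * B + 4 <= #|indeg_window t M| -> router E (indeg_window t M) 2 B.
Proof.
move=> big_S U card_U x y Sx Sy _.
case Exy: (E x y); first by exists [::]; rewrite /= Exy andbT disjoint_has.
have [/existsP [z /and3P [Uz Exz Ezy]] | /existsPn no_mid] :=
  boolP [exists z, [&& z \notin U, E x z & E z y]].
  by exists [:: z]; rewrite /= Exz Ezy disjoint_has /= (negbTE Uz).
have [/existsP [a /existsP [b /and5P [Ua Ub Exa Eab Eby]]] | no_bridge] :=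
  boolP [exists a, exists b, [&& a \notin U, b \notin U, E x a, E a b & E b y]].
  by exists [:: a; b]; rewrite /= Exa Eab Eby disjoint_has /= (negbTE Ua) (negbTE Ub).
suff : #|indeg_window t M| <= 5 * M + 6 * #|U| + 3 by lia.
apply: (card_indeg_window_le Sx Sy) => [z Uz Exz | a b Ua Ub Exa Eby].
  by have := no_mid z; rewrite Uz Exz.
apply/negP => Eab; move/existsPn/(_ a): no_bridge => /existsPn/(_ b).
by rewrite Ua Ub Exa Eab Eby.
Qed.

End IndegWindow.

Section FarRouter.
Variables (V : finType) (E : rel V).
Hypothesis tE : tournament E.

Lemma indeg_gap_path s t M (F : {set V}) :
  indeg E s + M < indeg E t -> #|F| <= M + 1 ->
  exists p : seq V, [/\ size p <= 1, path E s (rcons p t) & [disjoint p & F]].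
Proof.
move=> gap_st card_F.
case Est: (E s t); first by exists [::]; rewrite /= Est andbT disjoint_has.
have Ets : E t s.
  by apply: (tour_total tE) (negbT Est); apply: contraTneq gap_st => ->; lia.
have := indeg_lt_add_mid tE Ets; set C := [set z | E s z && E z t] => big_C.
have [z] : exists z, z \in C :\: F by apply/set0Pn; rewrite -card_gt0 cardsD;
  have := subset_leq_card (subsetIr C F); lia.
rewrite !inE => /andP [Fz /andP [Esz Ezt]].
by exists [:: z]; rewrite /= Esz Ezt disjoint_has /= (negbTE Fz).
Qed.

Lemma far_router (X : {set V}) (P : {set V * V}) M B :
  {in P, forall p, E p.1 p.2} ->
  {in P, forall p, {in X, forall x,
    indeg E x + M < indeg E p.1 /\ indeg E p.2 + M < indeg E x}} ->
  {in P &, injective fst} -> {in P &, injective snd} ->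
  2 * B < #|P| -> B <= M + 1 -> router E X 4 B.
Proof.
move=> E_P far_P inj1 inj2 big_P le_BM U card_U x y Xx Xy _.
have [[u a] Pua /= /andP [Uu Ua]] : exists2 p, p \in P & (p.1 \notin U) && (p.2 \notin U).
  by apply: matching_avoid => //; lia.
have [[gap_xu _] [_ gap_ay]] := (far_P _ Pua x Xx, far_P _ Pua y Xy).
have [q1 [size_q1 path_q1 U_q1]] := indeg_gap_path gap_xu (leq_trans card_U le_BM).
have [q2 [size_q2 path_q2 U_q2]] := indeg_gap_path gap_ay (leq_trans card_U le_BM).
exists (q1 ++ u :: a :: q2); split.
- by rewrite size_cat /=; lia.
- by rewrite -cat_rcons rcons_cat cat_path last_rcons path_q1 /= (E_P _ Pua) path_q2.
- by rewrite disjoint_cat !disjoint_cons U_q1 U_q2 Uu Ua.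
Qed.

End FarRouter.

Lemma k_disjoint_copies_of_paths (VH V : finType) (AH : rel VH) (E : rel V) k
    (f : 'I_k * VH -> V) (P : 'I_k * (VH * VH) -> seq V) :
  injective f ->
  (forall i u v, AH u v ->
     [/\ path E (f (i, u)) (rcons (P (i, (u, v))) (f (i, v))), uniq (P (i, (u, v))) &
         [disjoint P (i, (u, v)) & codom f]]) ->
  (forall d d', AH d.2.1 d.2.2 -> AH d'.2.1 d'.2.2 -> d != d' -> [disjoint P d & P d']) ->
  has_k_disjoint_copies AH E k.
Proof.
move=> inj_f arc_P disj_P.
exists (fun i h => f (i, h)), (fun i u v => P (i, (u, v))); split.
  move=> i; split; first by move=> h h' /inj_f [].
  split=> [u v AHuv | u v u' v' AHuv AHu'v' neq_uv w Pw].
    have [path_P uniq_P f_P] := arc_P i u v AHuv; split=> // w x Pw.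
    by apply: contraTneq Pw => ->; rewrite (disjointFl f_P) ?codom_f.
  rewrite (disjointFr (disj_P (i, (u, v)) (i, (u', v')) AHuv AHu'v' _) Pw) //.
  by apply: contra neq_uv => /eqP [-> ->].
move=> i j neq_ij; rewrite -setI_eq0 -subset0; apply/subsetP => w; rewrite !inE.
case/andP => /orP [/existsP [x /eqP ->] | /existsP [[u v] /andP [AHuv Pw]]]
  /orP [/existsP [x' /eqP eq_w] | /existsP [[u' v'] /andP [AHu'v' Pw']]].
- by case/inj_f: eq_w => eq_ij; rewrite eq_ij eqxx in neq_ij.
- by have [_ _ f_P] := arc_P j u' v' AHu'v'; rewrite (disjointFl f_P) ?codom_f in Pw'.
- by have [_ _ f_P] := arc_P i u v AHuv; rewrite eq_w (disjointFl f_P) ?codom_f in Pw.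
- rewrite (disjointFr (disj_P (i, (u, v)) (j, (u', v')) AHuv AHu'v' _) Pw) // in Pw'.
  by apply: contra neq_ij => /eqP [->].
Qed.

Section Embedding.
Variables (V : finType) (E : rel V) (X : {set V}) (l B : nat).
Hypothesis router_X : router E X l B.

Lemma router_disjoint_paths (D : eqType) (s : seq D) (src dst : D -> V) (U : {set V}) :
  {in s, forall d, [/\ src d \in X, dst d \in X & src d != dst d]} ->
  #|U| + l * size s <= B ->
  exists P : D -> seq V,
    {in s, forall d, [/\ path E (src d) (rcons (P d) (dst d)), uniq (P d) &
                         [disjoint P d & U]]} /\
    {in s &, forall d d', d != d' -> [disjoint P d & P d']}.
Proof.
elim: s U => [|d s IHs] U ends_s budget; first by exists (fun _ => [::]).
have [Xs Xd neq_sd] := ends_s d (mem_head _ _).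
rewrite /= mulnS in budget; have card_U : #|U| <= B by lia.
have [p [size_p path_p U_p]] := router_X card_U Xs Xd neq_sd.
have [q [path_q uniq_q size_q] sub_qp] := path_shorten neq_sd path_p.
have U_q : [disjoint q & U] by apply: disjointWl U_p; apply/subsetP.
have [P [P_s disj_s]] : exists P : D -> seq V,
    {in s, forall d, [/\ path E (src d) (rcons (P d) (dst d)), uniq (P d) &
                         [disjoint P d & U :|: [set w in q]]]} /\
    {in s &, forall d d', d != d' -> [disjoint P d & P d']}.
  apply: IHs => [e s_e | ]; first by apply: ends_s; rewrite inE s_e orbT.
  have card_q : #|[set w in q]| <= l.
    by rewrite cardsE (leq_trans (card_size q)) // (leq_trans size_q).
  by have := (leq_card_setU U [set w in q]).1; lia.
have disjU e : e \in s -> [disjoint P e & U] /\ [disjoint P e & q].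
  move=> s_e; have [_ _ disj_e] := P_s e s_e.
  by split; apply: disjointWr disj_e; apply/subsetP => w; rewrite !inE => ->; rewrite ?orbT.
exists (fun e => if e == d then q else P e); split => [e | e e'].
  rewrite inE; case: eqP => [-> | _] //= s_e.
  by have [-> -> _] := P_s e s_e; case: (disjU e s_e).
rewrite !inE; case: (eqVneq e d) => [-> | neq_ed];
  case: (eqVneq e' d) => [-> | neq_e'd] //= s_e s_e' neq_ee'.
- by case: (disjU e' s_e') => _; rewrite disjoint_sym.
- by case: (disjU e s_e).
- exact: disj_s.
Qed.

Lemma router_disjoint_copies (VH : finType) (AH : rel VH) k :
  simple_digraph AH -> k * #|VH| <= #|X| ->
  k * #|VH| + l * (k * #|[set p : VH * VH | AH p.1 p.2]|) <= B ->
  has_k_disjoint_copies AH E k.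
Proof.
move=> irr_AH small_H budget.
have [f inj_f X_f] : exists2 f : 'I_k * VH -> V, injective f & forall c, f c \in X.
  by apply: injection_into; rewrite card_prod card_ord.
pose arcs := [set d : 'I_k * (VH * VH) | AH d.2.1 d.2.2].
have card_arcs : #|arcs| = k * #|[set p : VH * VH | AH p.1 p.2]|.
  have -> : arcs = setX [set: 'I_k] [set p : VH * VH | AH p.1 p.2].
    by apply/setP => -[i [u v]]; rewrite !inE.
  by rewrite cardsX cardsT card_ord.
pose src (d : 'I_k * (VH * VH)) := f (d.1, d.2.1).
pose dst (d : 'I_k * (VH * VH)) := f (d.1, d.2.2).
have ends : {in enum arcs, forall d, [/\ src d \in X, dst d \in X & src d != dst d]}.
  move=> [i [u v]]; rewrite mem_enum inE /= => AHuv; rewrite !X_f; split=> //.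
  by apply: contraTneq AHuv => /inj_f [->]; rewrite irr_AH.
have budget_arcs : #|[set w in codom f]| + l * size (enum arcs) <= B.
  rewrite cardsE -cardE card_arcs (leq_trans _ budget) // leq_add2r.
  by apply: leq_trans (card_size _) _; rewrite size_codom card_prod card_ord.
have [P [P_arcs disj_arcs]] := router_disjoint_paths ends budget_arcs.
apply: (k_disjoint_copies_of_paths (f := f) (P := P)) => // [i u v AHuv | d d' AHd AHd'].
  have := P_arcs (i, (u, v)); rewrite mem_enum inE => /(_ AHuv) [path_P uniq_P f_P].
  by split=> //; apply: disjointWr f_P; apply/subsetP => w; rewrite inE.
by apply: disj_arcs; rewrite mem_enum inE.
Qed.

End Embedding.

Section SeparationDecomposition.
Variables (V : finType) (E : rel V) (pos : V -> nat).
Hypothesis pos_lt : forall v, pos v < #|V|.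

Let n := #|V|.

Definition separation al (S : {set V} * {set V}) : bool :=
  [&& S.1 \subset [set v | pos v < al], S.2 \subset [set v | al < pos v] &
      [forall a in S.1, forall b in S.2, E a b]].

Lemma separationP al (A B : {set V}) :
  reflect [/\ A \subset [set v | pos v < al], B \subset [set v | al < pos v] &
              forall a b, a \in A -> b \in B -> E a b]
          (separation al (A, B)).
Proof.
apply: (iffP and3P) => -[subA subB sepAB]; split=> //.
  by move=> a b Aa Bb; move/forall_inP: sepAB => /(_ a Aa) /forall_inP; apply.
by apply/forall_inP => a Aa; apply/forall_inP => b Bb; apply: sepAB.
Qed.

(* Lexicographic: maximise #|A| + #|B|, then minimise #|A|; the tie-break makes
   best separations nest. *)
Definition sep_score (S : {set V} * {set V}) := (#|S.1| + #|S.2|) * n.+1 + (n - #|S.1|).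

Definition best_sep al := [arg max_(S > (set0, set0) | separation al S) sep_score S].
Definition sepL al := (best_sep al).1.
Definition sepR al := (best_sep al).2.

Lemma best_sepP al : separation al (sepL al, sepR al) /\
  forall S, separation al S -> sep_score S <= sep_score (sepL al, sepR al).
Proof.
rewrite /sepL /sepR -surjective_pairing /best_sep.
case: arg_maxnP => [| S sepS maxS]; last by split.
by apply/separationP; split; rewrite ?sub0set // => a b; rewrite inE.
Qed.

Lemma best_sep_max al A B : separation al (A, B) ->
  #|A| + #|B| <= #|sepL al| + #|sepR al| /\
  (#|A| + #|B| = #|sepL al| + #|sepR al| -> #|sepL al| <= #|A|).
Proof.
move=> sepAB; have [_ /(_ _ sepAB)] := best_sepP al; rewrite /sep_score /=.
have := max_card A; have := max_card (sepL al); rewrite -/n.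
set s1 := #|A| + #|B|; set s2 := #|sepL al| + #|sepR al| => le_Ln le_An le_score.
have le_s : s1 <= s2.
  rewrite leqNgt; apply/negP => lt_s.
  by have := leq_mul lt_s (leqnn n.+1); rewrite mulSn; lia.
by split=> // eq_s; move: le_score; rewrite eq_s; lia.
Qed.

Lemma best_sep_nested al be :
  al <= be -> sepL al \subset sepL be /\ sepR be \subset sepR al.
Proof.
move=> le_ab.
have /separationP [La Ra sep_a] := (best_sepP al).1.
have /separationP [Lb Rb sep_b] := (best_sepP be).1.
have sep_meet : separation al (sepL al :&: sepL be, sepR al :|: sepR be).
  apply/separationP; split.
  - exact: subset_trans (subsetIl _ _) La.
  - rewrite subUset Ra; apply: subset_trans Rb _; apply/subsetP => v; rewrite !inE; lia.
  - by move=> a b /setIP [? ?] /setUP [] ?; [apply: sep_a | apply: sep_b].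
have sep_join : separation be (sepL al :|: sepL be, sepR al :&: sepR be).
  apply/separationP; split.
  - rewrite subUset Lb andbT; apply: subset_trans La _; apply/subsetP => v; rewrite !inE; lia.
  - exact: subset_trans (subsetIr _ _) Rb.
  - by move=> a b /setUP [] ? /setIP [? ?]; [apply: sep_a | apply: sep_b].
have [le_meet min_meet] := best_sep_max sep_meet.
have [le_join _] := best_sep_max sep_join.
have cardL := cardsUI (sepL al) (sepL be); have cardR := cardsUI (sepR al) (sepR be).
have subL : sepL al \subset sepL be.
  by apply/setIidPl/eqP; rewrite eqEcard subsetIl; apply: min_meet; lia.
split=> //; apply/setIidPr/eqP; rewrite eqEcard subsetIr /=.
by move: le_join cardL; rewrite (setUidPr subL); lia.
Qed.

Lemma notin_sepR_pos v : v \notin sepR (pos v).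
Proof.
have /separationP [_ Rv _] := (best_sepP (pos v)).1.
by apply: contraTN isT => /(subsetP Rv); rewrite inE ltnn.
Qed.

Lemma notin_sepL_pos v : v \notin sepL (pos v).
Proof.
have /separationP [Lv _ _] := (best_sepP (pos v)).1.
by apply: contraTN isT => /(subsetP Lv); rewrite inE ltnn.
Qed.

Lemma sep_lo_ex v : exists al, v \notin sepR al.
Proof. by exists (pos v); apply: notin_sepR_pos. Qed.

Lemma sep_hi_ex v : exists al, (al < n) && (v \notin sepL al).
Proof. by exists (pos v); rewrite pos_lt notin_sepL_pos. Qed.

Lemma sep_hi_bounded v al : (al < n) && (v \notin sepL al) -> al <= n.
Proof. by case/andP => /ltnW. Qed.

(* By nesting, [v] is on neither side of the best separation at [al] exactly when
   [cut_lo v <= al <= cut_hi v]. *)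
Definition cut_lo v := ex_minn (sep_lo_ex v).
Definition cut_hi v := ex_maxn (sep_hi_ex v) (@sep_hi_bounded v).

Lemma cut_loP v al :
  (al < cut_lo v -> v \in sepR al) /\ (cut_lo v <= al -> v \notin sepR al).
Proof.
rewrite /cut_lo; case: ex_minnP => m Rm min_m; split=> [lt_am | le_ma].
  by apply: contraTT lt_am => /min_m; rewrite -leqNgt.
by apply: contra Rm; apply/subsetP; case: (best_sep_nested le_ma).
Qed.

Lemma cut_hiP v al :
  (cut_hi v < al < n -> v \in sepL al) /\ (al <= cut_hi v -> v \notin sepL al).
Proof.
rewrite /cut_hi; case: ex_maxnP => m /andP [_ Lm] max_m.
split=> [/andP [lt_ma lt_an] | le_am].
  by apply: contraTT lt_ma => Lv; rewrite -leqNgt max_m // lt_an.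
by apply: contra Lm; apply/subsetP; case: (best_sep_nested le_am).
Qed.

Lemma cut_lo_le_pos v : cut_lo v <= pos v.
Proof. by rewrite /cut_lo; case: ex_minnP => m _; apply; apply: notin_sepR_pos. Qed.

Lemma pos_le_cut_hi v : pos v <= cut_hi v.
Proof. by rewrite /cut_hi; case: ex_maxnP => m _; apply; rewrite pos_lt notin_sepL_pos. Qed.

Lemma cut_hi_lt v : cut_hi v < n.
Proof. by rewrite /cut_hi; case: ex_maxnP => m /andP []. Qed.

Definition sep_decomp v : int * int := (Posz (cut_lo v), Posz (cut_hi v).+1).

Lemma sep_decompP : interval_decomp E sep_decomp.
Proof.
split=> [v | u v]; rewrite /= ?lez_nat ?ltz_nat.
  by have := cut_lo_le_pos v; have := pos_le_cut_hi v; lia.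
move=> lt_uv; have /separationP [_ _ sep] := (best_sepP (cut_hi u).+1).1.
apply: sep; last exact: (cut_loP v _).1.
by apply: (cut_hiP u _).1; have := cut_lo_le_pos v; have := pos_lt v; lia.
Qed.

Variable w : nat.
Hypothesis sep_big :
  forall al, al < n -> exists2 S, separation al S & n <= w + #|S.1| + #|S.2|.

Lemma card_spanning_cut_le be : #|[set v | cut_lo v <= be <= cut_hi v]| <= w.
Proof.
case: (ltnP be n) => [lt_bn | le_nb]; last first.
  have -> : [set v | cut_lo v <= be <= cut_hi v] = set0.
    by apply/setP => v; rewrite !inE; have := cut_hi_lt v; lia.
  by rewrite cards0.
have [[A B] sepAB big_AB] := sep_big lt_bn.
have [le_AB _] := best_sep_max sepAB.
have /separationP [Lbe Rbe _] := (best_sepP be).1.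
have disjLR : sepL be :&: sepR be = set0.
  apply/setP => v; rewrite !inE; apply/negbTE/andP => -[/(subsetP Lbe) + /(subsetP Rbe)].
  by rewrite !inE; lia.
have sub : [set v | cut_lo v <= be <= cut_hi v] \subset ~: (sepL be :|: sepR be).
  apply/subsetP => v; rewrite !inE => /andP [le_lb le_br].
  by rewrite negb_or (cut_loP v be).2 // (cut_hiP v be).2.
have := subset_leq_card sub; have := cardsC (sepL be :|: sepR be).
by rewrite cardsU disjLR cards0 -/n; move: big_AB le_AB => /=; lia.
Qed.

Lemma sep_decomp_width : width_le sep_decomp (2 * w).
Proof.
case=> m; last by rewrite (_ : [set v | _] = set0) ?cards0 //; apply/setP => v; rewrite !inE.
have sub : [set v | (Posz (cut_lo v) <= Posz m)%R && (Posz m <= Posz (cut_hi v).+1)%R] \subset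
    [set v | cut_lo v <= m <= cut_hi v] :|: [set v | cut_lo v <= m.-1 <= cut_hi v].
  apply/subsetP => v; rewrite !inE !lez_nat.
  by have := cut_lo_le_pos v; have := pos_le_cut_hi v; lia.
apply: leq_trans (subset_leq_card sub) _; apply: leq_trans (leq_card_setU _ _).1 _.
by have := card_spanning_cut_le m; have := card_spanning_cut_le m.-1; lia.
Qed.

Lemma pathwidth_le_sep : pathwidth E <= 2 * w.
Proof.
rewrite /pathwidth; case: ex_minnP => m _; apply; apply/asboolP.
by exists sep_decomp; split; [apply: sep_decompP | apply: sep_decomp_width].
Qed.

End SeparationDecomposition.

Section KeyOrder.
Variables (V : finType) (key : V -> nat).

Definition key_sorted := sort (fun u v => key u <= key v) (enum V).
Definition key_pos v := index v key_sorted.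

Lemma size_key_sorted : size key_sorted = #|V|.
Proof. by rewrite size_sort cardE. Qed.

Lemma mem_key_sorted v : v \in key_sorted.
Proof. by rewrite mem_sort mem_enum. Qed.

Lemma key_pos_lt v : key_pos v < #|V|.
Proof. by rewrite -size_key_sorted index_mem mem_key_sorted. Qed.

Lemma nth_key_pos x0 v : nth x0 key_sorted (key_pos v) = v.
Proof. by rewrite nth_index // mem_key_sorted. Qed.

Lemma key_pos_nth x0 i : i < #|V| -> key_pos (nth x0 key_sorted i) = i.
Proof.
by rewrite -size_key_sorted => lt_i; apply: index_uniq; rewrite // sort_uniq enum_uniq.
Qed.

Lemma key_pos_mono u v : key_pos u <= key_pos v -> key u <= key v.
Proof.
have sorted_key : sorted (fun a b => key a <= key b) key_sorted.
  by apply: sort_sorted => a b; apply: leq_total.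
have trans_key : transitive (fun a b => key a <= key b) by move=> a b c; apply: leq_trans.
move=> le_uv; have := sorted_leq_nth trans_key (fun a => leqnn (key a)) u sorted_key.
move/(_ (key_pos u) (key_pos v)); rewrite !inE size_key_sorted !key_pos_lt !nth_key_pos.
exact.
Qed.

Lemma card_key_pos_range lo hi :
  hi <= #|V| -> #|[set v | lo <= key_pos v < hi]| = hi - lo.
Proof.
move=> le_hn; case: (leqP hi lo) => [le_hl | lt_lh].
  have -> : [set v | lo <= key_pos v < hi] = set0 by apply/setP => v; rewrite !inE; lia.
  by rewrite cards0; lia.
have [x0 _] : exists x0 : V, x0 \in setT by apply/set0Pn; rewrite -card_gt0 cardsT; lia.
pose g (i : 'I_(hi - lo)) := nth x0 key_sorted (lo + i).
have pos_g i : key_pos (g i) = lo + i by rewrite key_pos_nth //; have := ltn_ord i; lia.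
have -> : [set v | lo <= key_pos v < hi] = g @: setT.
  apply/setP => v; rewrite inE; apply/idP/imsetP => [range_v | [i _ ->]].
    have lt_v : key_pos v - lo < hi - lo by lia.
    by exists (Ordinal lt_v); rewrite ?inE //= /g subnKC ?nth_key_pos //; lia.
  by rewrite pos_g; have := ltn_ord i; lia.
rewrite card_imset ?cardsT ?card_ord // => i j /(congr1 key_pos).
by rewrite !pos_g => /addnI /val_inj.
Qed.

Lemma card_key_pos_range_le lo hi : #|[set v | lo <= key_pos v < hi]| <= hi - lo.
Proof.
have -> : [set v | lo <= key_pos v < hi] = [set v | lo <= key_pos v < minn hi #|V|].
  by apply/setP => v; rewrite !inE leq_min key_pos_lt andbT.
by rewrite card_key_pos_range ?geq_minr //; lia.
Qed.

End KeyOrder.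

Section Main.
Variables (VH : finType) (AH : rel VH) (V : finType) (E : rel V) (k : nat).
Hypotheses (irr_AH : simple_digraph AH) (tE : tournament E).
Hypothesis no_copies : ~ has_k_disjoint_copies AH E k.

(* [B] pays for the branch vertices and up to four inner vertices per arc of
   k copies of H; beyond [K] = 5 B + 6 B + 3 vertices, an in-degree window
   routes them (indeg_window_router with M = B). *)
Definition branch_total := k * #|VH|.
Definition route_budget := branch_total + 4 * (k * #|[set p : VH * VH | AH p.1 p.2]|).
Definition window_bound := 11 * route_budget + 3.
Definition cut_bound := 2 * route_budget + 1 + branch_total + 2 * window_bound.
Definition indeg_pos := key_pos (indeg E).

Local Notation N := branch_total.
Local Notation B := route_budget.
Local Notation K := window_bound.
Local Notation R := cut_bound.
Local Notation pos := indeg_pos.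

Lemma indeg_pos_lt v : pos v < #|V|.
Proof. exact: key_pos_lt. Qed.

Lemma card_indeg_pos_range lo hi : hi <= #|V| -> #|[set v | lo <= pos v < hi]| = hi - lo.
Proof. exact: card_key_pos_range. Qed.

Lemma card_indeg_pos_range_le lo hi : #|[set v | lo <= pos v < hi]| <= hi - lo.
Proof. exact: card_key_pos_range_le. Qed.

Lemma card_indeg_pos_window_le (T : finType) (P : {set T}) (f : T -> V) lo hi :
  {in P &, injective f} -> #|[set p in P | lo <= pos (f p) < hi]| <= hi - lo.
Proof.
move=> inj_f; apply: leq_trans (card_indeg_pos_range_le lo hi).
apply: (card_le_inj_in (f := f)) => [p q /setIdP [Pp _] /setIdP [Pq _] | p /setIdP [_ ?]].
  exact: inj_f.
by rewrite inE.
Qed.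

Lemma card_indeg_window_small t : #|indeg_window E t B| <= K.
Proof.
rewrite leqNgt; apply/negP => big_S; apply: no_copies.
apply: (router_disjoint_copies (indeg_window_router tE (t := t) (M := B) (B := B) _)) => //;
  by move: big_S; rewrite /window_bound /route_budget /branch_total; lia.
Qed.

Lemma indeg_gap_of_pos_gap u v : pos v + K < pos u -> indeg E v + B < indeg E u.
Proof.
move=> gap_vu; rewrite ltnNge; apply/negP => le_uv.
have sub : [set z | pos v <= pos z < (pos u).+1] \subset indeg_window E (indeg E v) B.
  apply/subsetP => z; rewrite !inE => /andP [le_vz lt_zu].
  by rewrite (key_pos_mono le_vz) (leq_trans (key_pos_mono (ltnSE lt_zu)) le_uv).
have := subset_leq_card sub; rewrite card_indeg_pos_range ?key_pos_lt //.
by have := card_indeg_window_small (indeg E v); lia.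
Qed.

Definition crossing al u a := [&& E u a, pos a < al & al < pos u].

Lemma crossing_matching_small al (P : {set V * V}) :
  {in P, forall p, crossing al p.1 p.2} -> {in P &, injective fst} ->
  {in P &, injective snd} -> #|P| < R.
Proof.
move=> cross_P inj1 inj2; rewrite ltnNge; apply/negP => big_P; apply: no_copies.
pose near2 := [set p in P | al - (N + K) <= pos p.2 < al].
pose near1 := [set p in P | al.+1 <= pos p.1 < (al + K).+1].
pose far := [set p in P | (pos p.2 + N + K < al) && (al + K < pos p.1)].
have sub_far : {subset far <= P} by move=> p /setIdP [].
have card_near2 : #|near2| <= N + K.
  by apply: leq_trans (card_indeg_pos_window_le _ _ inj2) _; lia.
have card_near1 : #|near1| <= K.
  by apply: leq_trans (card_indeg_pos_window_le _ _ inj1) _; lia.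
have cover : P \subset far :|: near2 :|: near1.
  apply/subsetP => -[u a] Pua; have /and3P [_ /= lt_a lt_u] := cross_P _ Pua.
  by rewrite !inE Pua /=; lia.
have card_far : 2 * B < #|far|.
  have card_P : #|P| <= #|far| + (N + K) + K.
    apply: leq_trans (subset_leq_card cover) _; apply: leq_trans (leq_card_setU _ _).1 _.
    apply: leq_add card_near1; apply: leq_trans (leq_card_setU _ _).1 _.
    exact: leq_add (leqnn _) card_near2.
  by move: big_P; rewrite /cut_bound; lia.
have [[u0 a0] /setIdP [_ /andP [/= far_a0 far_u0]]] : exists p, p \in far.
  by apply/set0Pn; rewrite -card_gt0 (leq_ltn_trans (leq0n _) card_far).
pose X := [set v | al - N <= pos v < al].
have small_X : N <= #|X| by rewrite card_indeg_pos_range; have := indeg_pos_lt u0; lia.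
apply: (router_disjoint_copies (l := 4) _ irr_AH small_X (leqnn B)).
(* Far arcs have both ends more than [K] positions away from [X]. *)
apply: (far_router tE (P := far) (M := B)) => //; try lia.
- by move=> p /sub_far /cross_P /and3P [].
- move=> [u a] /setIdP [_ /andP [/= far_a far_u]] x; rewrite inE => /andP [le_x lt_x].
  by split; apply: indeg_gap_of_pos_gap; lia.
- by move=> p q /sub_far Pp /sub_far Pq; apply: inj1.
- by move=> p q /sub_far Pp /sub_far Pq; apply: inj2.
Qed.

Lemma cut_separation al :
  al < #|V| -> exists2 S, separation E pos al S & #|V| <= 2 * R + #|S.1| + #|S.2|.
Proof.
move=> lt_al; have [P [cross_P inj1 inj2 cover_P]] := maximal_matching (crossing al).
have small_P := crossing_matching_small cross_P inj1 inj2.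
exists ([set v | pos v < al] :\: snd @: P, [set v | al < pos v] :\: fst @: P).
  apply/separationP; split; [exact: subsetDl | exact: subsetDl |].
  move=> a b /setDP [+ Pa] /setDP [+ Pb]; rewrite !inE => lt_a lt_b.
  have neq_ab : a != b by apply: contraTneq lt_a => ->; rewrite -leqNgt ltnW.
  apply: contraT => nEab; have := cover_P b a.
  by rewrite /crossing (tour_total tE neq_ab nEab) lt_a lt_b (negbTE Pa) (negbTE Pb) => /(_ isT).
have card_lt : #|[set v | pos v < al]| = al.
  by rewrite -[RHS]subn0 -(card_indeg_pos_range 0 (ltnW lt_al)); apply: eq_card => v; rewrite !inE.
have card_gt : #|[set v | al < pos v]| = #|V| - al.+1.
  rewrite -(card_indeg_pos_range al.+1 (leqnn _)).
  by apply: eq_card => v; rewrite !inE indeg_pos_lt andbT.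
have cardA : al <= #|[set v | pos v < al] :\: snd @: P| + #|P|.
  by rewrite -{1}card_lt (leq_trans (card_setD_ge _ (snd @: P))) // leq_add2l leq_imset_card.
have cardB : #|V| - al.+1 <= #|[set v | al < pos v] :\: fst @: P| + #|P|.
  by rewrite -{1}card_gt (leq_trans (card_setD_ge _ (fst @: P))) // leq_add2l leq_imset_card.
(* [lia] treats the occurrences of [#|P|] as distinct atoms unless generalized. *)
by move: #|P| cardA cardB small_P => m /=; lia.
Qed.

Lemma pathwidth_small : pathwidth E <= 2 * (2 * R).
Proof. exact: (pathwidth_le_sep (E := E) indeg_pos_lt cut_separation). Qed.

End Main.

Theorem corollary10 :
  exists d : nat,
    forall (VH : finType) (AH : rel VH), simple_digraph AH ->
    forall k : nat, 0 < k ->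
    forall (VT : finType) (E : rel VT), tournament E ->
      ~ has_k_disjoint_copies AH E k ->
      pathwidth E <= d * dg_size AH * k.
Proof.
exists 384 => VH AH irr_AH k k_gt0 VT E tE no_copies.
have [VH0 | VH_gt0] := posnP #|VH|.
  case: no_copies; apply: (router_disjoint_copies (X := set0) (l := 0) (B := 0)) => //.
  - by move=> U _ x y; rewrite inE.
  - by rewrite VH0 muln0.
  - by rewrite VH0 muln0.
apply: leq_trans (pathwidth_small irr_AH tE no_copies) _.
rewrite /cut_bound /window_bound /route_budget /branch_total /dg_size.
have : 0 < k * #|VH| by rewrite muln_gt0 k_gt0.
nia.
Qed.
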